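(* Let $\alpha\in(0,1]$ be rational, $\lambda\in\mathbb N$, $P$ a profile, and $N'\subseteq N$ a group that is $(\alpha,\lambda)$-significant in $P$. Let $r$ be any ranking that Reverse SeqPAV may output on $P$ (under any tie-breaking). Then there exists a real number $y\ge\lambda$ such that $\mathrm{avg}(N',r_{\le k})\ge y$ for $k=\min(m,\lfloor y/\alpha\rfloor)$.
   Context: Let $N=[n]$ be a finite set of voters and $A$ a finite set of $m$ alternatives; a profile $P=(A_1,\dots,A_n)$ gives each voter $i$ a non-empty approval set $A_i\subseteq A$. A ranking $r=(r_1,\dots,r_m)$ is a linear order of $A$ and $r_{\le k}=\{r_1,\dots,r_k\}$. For nonempty $N'\subseteq N$ and $S\subseteq A$, $\mathrm{avg}(N',S)=\frac1{|N'|}\sum_{i\in N'}|A_i\cap S|$. The cohesiveness of $N'$ is $\lambda(N')=|\bigcap_{i\in N'}A_i|$; $N'$ is $(\alpha,\lambda)$-significant in $P$ if $|N'|=\lceil\alpha n\rceil$ and $\lambda(N')\ge\lambda$. For $S\subseteq A$, $w_{\mathrm{PAV}}(S)=\sum_{i\in N}\sum_{j=1}^{|A_i\cap S|}\frac1j$. Reverse SeqPAV builds a ranking from the bottom: it starts with $S=A$ and the empty ranking, and at each step picks $a\in S$ minimizing $w_{\mathrm{PAV}}(S)-w_{\mathrm{PAV}}(S\setminus\{a\})$ (ties broken arbitrarily), removes $a$ from $S$ and prepends it to the ranking, until $S$ is empty. *)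

From HB Require Import structures.
From mathcomp Require Import all_boot all_order all_algebra.
Set Implicit Arguments. Unset Strict Implicit. Unset Printing Implicit Defensive.
Import Order.TTheory GRing.Theory Num.Theory.
Local Open Scope ring_scope.

(* Voters are 'I_n, alternatives a finType Alt (m = #|Alt|),
   a profile is P : 'I_n -> {set Alt}.  Numeric quantities live in an
   arbitrary archimedean field R (e.g. a subfield of the reals). *)

Definition profile_ok (n : nat) (Alt : finType) (P : 'I_n -> {set Alt}) : Prop :=
  forall i, P i != set0.

Definition avg (R : numFieldType) (n : nat) (Alt : finType)
  (P : 'I_n -> {set Alt}) (N' : {set 'I_n}) (S : {set Alt}) : R :=
  (\sum_(i in N') (#|P i :&: S|)%:R) / (#|N'|)%:R.

Definition cohesiveness (n : nat) (Alt : finType)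
  (P : 'I_n -> {set Alt}) (N' : {set 'I_n}) : nat :=
  #|\bigcap_(i in N') P i|.

Definition significant (n : nat) (Alt : finType) (P : 'I_n -> {set Alt})
  (alpha : rat) (lam : nat) (N' : {set 'I_n}) : Prop :=
  (#|N'|%:Z = Num.ceil (alpha * n%:R)) /\ (lam <= cohesiveness P N')%N.

Definition wPAV (R : numFieldType) (n : nat) (Alt : finType)
  (P : 'I_n -> {set Alt}) (S : {set Alt}) : R :=
  \sum_(i < n) \sum_(1 <= j < (#|P i :&: S|).+1) (j%:R)^-1.

Definition marg (R : numFieldType) (n : nat) (Alt : finType)
  (P : 'I_n -> {set Alt}) (S : {set Alt}) (a : Alt) : R :=
  wPAV R P S - wPAV R P (S :\ a).

(* revpav R P S r : r is a possible ranking of the remaining set S produced by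
   Reverse SeqPAV (any tie-breaking).  The algorithm removes a minimizer a of
   the marginal contribution from S and prepends it to the ranking built so
   far; hence the final ranking is (ranking of S :\ a) followed by a. *)
Inductive revpav (R : numFieldType) (n : nat) (Alt : finType)
  (P : 'I_n -> {set Alt}) : {set Alt} -> seq Alt -> Prop :=
| revpav_nil : revpav R P set0 [::]
| revpav_step (S : {set Alt}) (a : Alt) (r : seq Alt) :
    a \in S ->
    (forall b, b \in S -> marg R P S a <= marg R P S b) ->
    revpav R P (S :\ a) r ->
    revpav R P S (rcons r a).

Definition revseqpav_output (R : numFieldType) (n : nat) (Alt : finType)
  (P : 'I_n -> {set Alt}) (r : seq Alt) : Prop :=
  revpav R P [set: Alt] r.

Definition top_k (Alt : finType) (r : seq Alt) (k : nat) : {set Alt} :=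
  [set x in take k r].

(* Let C be the set of alternatives approved by every member of N', so |C| >= lam.
   Follow Reverse SeqPAV from the full set downwards.  At a stage S with
   avg(N',S) < alpha |S| the removed alternative cannot lie in C: its marginal
   contribution is at least sum_{i in N'} 1/|A_i ∩ S|, which by Cauchy-Schwarz is
   >= |N'|^2 / sum_{i in N'} |A_i ∩ S| > |N'| / (alpha |S|) >= n / |S|, whereas the marginal contributions
   of the members of S sum to at most n.  Hence some stage S = r_{<=s} contains C
   and satisfies avg(N',S) >= alpha s; then y := avg(N',S) >= |C| >= lam and
   s <= floor(y / alpha). *)
From HB Require Import structures.
From mathcomp Require Import all_boot all_order all_algebra.
From mathcomp Require Import ring lra.
Set Implicit Arguments. Unset Strict Implicit. Unset Printing Implicit Defensive.
Import Order.TTheory GRing.Theory Num.Theory.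
Local Open Scope ring_scope.

Lemma sumr_mul_sumr_inv_ge_card (R : realFieldType) (I : finType) (A : {set I})
    (x : I -> R) :
  (forall i, i \in A -> 0 < x i) ->
  (#|A|%:R) ^+ 2 <= (\sum_(i in A) x i) * (\sum_(j in A) (x j)^-1).
Proof.
move=> xpos; rewrite big_distrlr /=.
have pair_ge2 i j : i \in A -> j \in A -> 2 <= x i * (x j)^-1 + x j * (x i)^-1.
  move=> iA jA; have xi := xpos i iA; have xj := xpos j jA.
  rewrite -subr_ge0.
  have -> : x i * (x j)^-1 + x j * (x i)^-1 - 2
            = (x i - x j) ^+ 2 / (x i * x j) by field; rewrite ?gt_eqF.
  by rewrite divr_ge0 ?sqr_ge0 // ltW ?mulr_gt0.
set D := \sum_(i in A) \sum_(j in A) x i * (x j)^-1.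
have twoD : D + D = \sum_(i in A) \sum_(j in A) (x i * (x j)^-1 + x j * (x i)^-1).
  by rewrite {2}/D exchange_big -big_split; apply: eq_bigr => i _; rewrite -big_split.
have : \sum_(i in A) \sum_(j in A) (2 : R) <= D + D.
  by rewrite twoD; apply: ler_sum => i iA; apply: ler_sum => j jA; exact: pair_ge2.
rewrite !sumr_const -mulrnA -[_ *+ (_ * _)]mulr_natr natrM => h2.
by rewrite expr2; lra.
Qed.

Lemma top_k_subset (Alt : finType) (r : seq Alt) s k :
  (s <= k)%N -> top_k r s \subset top_k r k.
Proof.
by move=> le_sk; apply/subsetP => x; rewrite !inE -(take_takel r le_sk); apply: mem_take.
Qed.

Section ReverseSeqPAV.
Variables (R : realFieldType) (n : nat) (Alt : finType) (P : 'I_n -> {set Alt}).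

Lemma revpav_support S r : revpav R P S r -> [set x in r] = S /\ size r = #|S|.
Proof.
elim=> [|S' a r' aS _ _ [IHset IHsize]].
  by split; [apply/setP => x; rewrite !inE | rewrite cards0].
split; last by rewrite size_rcons IHsize (cardsD1 a S') aS.
apply/setP => x; rewrite inE mem_rcons in_cons -[x \in r']inE IHset !inE.
by case: eqVneq => [->|].
Qed.

Lemma margE (S : {set Alt}) a :
  marg R P S a = \sum_(i < n) (if a \in P i :&: S then (#|P i :&: S|%:R)^-1 else 0).
Proof.
rewrite /marg /wPAV -sumrB; apply: eq_bigr => i _.
have -> : #|P i :&: S| = ((a \in P i :&: S) + #|P i :&: (S :\ a)|)%N.
  by rewrite setIDA -cardsD1.
case: (a \in P i :&: S) => /=; last by rewrite add0n subrr.
by rewrite add1n big_nat_recr //= addrAC subrr add0r.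
Qed.

(* Each voter i contributes 1/|A_i ∩ S| to exactly |A_i ∩ S| marginal contributions. *)
Lemma sum_marg_le (S : {set Alt}) : \sum_(b in S) marg R P S b <= n%:R.
Proof.
under eq_bigr => b _ do rewrite margE.
rewrite exchange_big /= -[n in n%:R]card_ord -sumr_const.
apply: ler_sum => i _; rewrite -big_mkcondr /=.
rewrite (eq_bigl (mem (P i :&: S))) => [|b]; last first.
  by rewrite !inE; case: (b \in S); rewrite ?andbF ?andbT.
rewrite sumr_const -[leLHS]mulr_natl.
have [->|cardP] := posnP #|P i :&: S|; first by rewrite mul0r.
by rewrite mulfV // pnatr_eq0 -lt0n.
Qed.

Lemma marg_ge_sum_inv (N' : {set 'I_n}) (S : {set Alt}) a :
  a \in S -> a \in \bigcap_(i in N') P i ->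
  \sum_(i in N') (#|P i :&: S|%:R : R)^-1 <= marg R P S a.
Proof.
move=> aS aC; rewrite margE [leRHS](bigID (mem N')) /= ler_wpDr //.
  by apply: sumr_ge0 => i _; case: ifP => // _; rewrite invr_ge0 ler0n.
by apply: ler_sum => i iN; rewrite inE aS (bigcapP aC).
Qed.

Lemma avg_ge0 (N' : {set 'I_n}) (T : {set Alt}) : 0 <= avg R P N' T.
Proof. by rewrite /avg divr_ge0 // sumr_ge0. Qed.

Lemma avgS (N' : {set 'I_n}) (T T' : {set Alt}) :
  T \subset T' -> avg R P N' T <= avg R P N' T'.
Proof.
move=> sTT'; rewrite /avg ler_wpM2r ?invr_ge0 //.
by apply: ler_sum => i _; rewrite ler_nat subset_leq_card // setIS.
Qed.

Lemma cohesiveness_le_avg (N' : {set 'I_n}) (T : {set Alt}) :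
  (0 < #|N'|)%N -> \bigcap_(i in N') P i \subset T ->
  (cohesiveness P N')%:R <= avg R P N' T.
Proof.
move=> N'0 sCT; rewrite /avg ler_pdivlMr ?ltr0n // mulr_natr -sumr_const.
apply: ler_sum => i iN; rewrite ler_nat subset_leq_card // subsetI sCT andbT.
by apply/subsetP => x /bigcapP; apply.
Qed.

Section CohesiveMinimizer.
Variables (N' : {set 'I_n}) (al : R).
Hypotheses (N'_gt0 : (0 < #|N'|)%N) (al_N' : al * n%:R <= #|N'|%:R).

(* If a member a of the common approval set is a marginal minimizer on S, then by
   Cauchy-Schwarz |S| |N'|^2 / (|N'| avg(N',S)) <= |S| marg a <= n. *)
Lemma cohesive_minimizer_avg_ge (S : {set Alt}) a :
  a \in S -> a \in \bigcap_(i in N') P i ->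
  (forall b, b \in S -> marg R P S a <= marg R P S b) ->
  al * #|S|%:R <= avg R P N' S.
Proof.
move=> aS aC amin.
pose x i : R := #|P i :&: S|%:R.
have xpos i : i \in N' -> 0 < x i.
  by move=> iN; rewrite ltr0n; apply/card_gt0P; exists a; rewrite inE aS (bigcapP aC).
set X := \sum_(i in N') x i; set V := \sum_(i in N') (x i)^-1.
set s : R := #|S|%:R; set k : R := #|N'|%:R.
have k_gt0 : 0 < k by rewrite ltr0n.
have n_gt0 : 0 < n%:R :> R.
  by case/card_gt0P: N'_gt0 => i _; rewrite ltr0n (leq_ltn_trans _ (ltn_ord i)).
have X_ge0 : 0 <= X by rewrite sumr_ge0 // => i /xpos/ltW.
have s_ge0 : 0 <= s := ler0n _ _.
have CS : k ^+ 2 <= X * V := sumr_mul_sumr_inv_ge_card xpos.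
have sV_le_n : s * V <= n%:R.
  apply: le_trans (sum_marg_le S); rewrite /s mulr_natl -sumr_const ler_sum // => b bS.
  by rewrite (le_trans (marg_ge_sum_inv aS aC)) ?amin.
rewrite /avg -/X ler_pdivlMr // -(ler_pM2r n_gt0).
have -> : al * s * k * n%:R = s * k * (al * n%:R) by ring.
apply: (le_trans (ler_wpM2l (mulr_ge0 s_ge0 (ltW k_gt0)) al_N')).
rewrite -mulrA -expr2 (le_trans (ler_wpM2l s_ge0 CS)) //.
by rewrite mulrCA ler_wpM2l.
Qed.

Lemma revpav_cohesive_prefix S r :
  revpav R P S r -> \bigcap_(i in N') P i \subset S ->
  exists s, [/\ (s <= size r)%N, \bigcap_(i in N') P i \subset top_k r s &
                al * s%:R <= avg R P N' (top_k r s)].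
Proof.
elim=> [|S' a r' aS amin rev_r' IH sCS]; first by exists 0%N; rewrite mulr0 avg_ge0.
have [setE sizeE] := revpav_support (revpav_step aS amin rev_r').
have [avg_ge|avg_lt] := leP (al * #|S'|%:R) (avg R P N' S').
  by exists (size (rcons r' a)); rewrite /top_k take_size setE sizeE.
have aC : a \notin \bigcap_(i in N') P i.
  by apply: contraTN avg_lt => aC; rewrite -leNgt (cohesive_minimizer_avg_ge aS).
have [|s [s_le sCr' avg_r']] := IH.
  apply/subsetP => x xC; rewrite !inE (subsetP sCS) // andbT.
  by apply: contraNneq aC => <-.
exists s; rewrite size_rcons /top_k -cats1 takel_cat //.
by split => //; apply: leqW.
Qed.

End CohesiveMinimizer.

End ReverseSeqPAV.

Lemma significant_card (R : numFieldType) n (Alt : finType) (P : 'I_n -> {set Alt})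
    (alpha : rat) lam (N' : {set 'I_n}) :
  (0 < n)%N -> 0 < alpha -> significant P alpha lam N' ->
  (0 < #|N'|)%N /\ ratr alpha * n%:R <= #|N'|%:R :> R.
Proof.
move=> n_gt0 alpha_gt0 [cardN' _].
have alpha_n_gt0 : 0 < alpha * n%:R by rewrite mulr_gt0 // ltr0n.
split.
  by rewrite -ltz_nat cardN' ceil_gt0.
rewrite -[#|N'|%:R : R]ratr_nat -[n%:R : R]ratr_nat -rmorphM ler_rat.
by have := ceil_ge (alpha * n%:R); rewrite -cardN' -pmulrn.
Qed.

Lemma leq_abs_floor_div (R : archiRealFieldType) (a y : R) s :
  0 < a -> a * s%:R <= y -> (s <= `|Num.floor (y / a)|)%N.
Proof.
move=> a_gt0 le_y; have : s%:Z%:~R <= y / a by rewrite ler_pdivlMr // mulrC.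
by rewrite -floor_ge_int; case: (Num.floor _) => m //=; rewrite lez_nat.
Qed.

Theorem theorem6 (R : archiRealFieldType) (n : nat) (Alt : finType)
    (P : 'I_n -> {set Alt}) (alpha : rat) (lam : nat) (N' : {set 'I_n})
    (r : seq Alt) :
  (0 < n)%N ->
  profile_ok P ->
  0 < alpha -> alpha <= 1 ->
  significant P alpha lam N' ->
  revseqpav_output R P r ->
  exists y : R, lam%:R <= y /\
    y <= avg R P N' (top_k r (minn #|Alt| `|Num.floor (y / ratr alpha)|%N)).
Proof.
move=> n_gt0 _ alpha_gt0 _ sigN' out_r.
have [N'_gt0 alpha_N'] := significant_card R n_gt0 alpha_gt0 sigN'.
have [s [s_le sCr avg_r]] :=
  revpav_cohesive_prefix N'_gt0 alpha_N' out_r (subsetT _).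
exists (avg R P N' (top_k r s)); split.
  apply: le_trans (cohesiveness_le_avg R N'_gt0 sCr).
  by rewrite ler_nat; case: sigN'.
apply/avgS/top_k_subset; rewrite leq_min leq_abs_floor_div ?ltr0q // andbT.
by have [_ sizeE] := revpav_support out_r; rewrite -cardsT -sizeE.
Qed.
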